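(* Let $\gamma>0$ and let $S\subset(0,1)$ be a set of size $d$, and let $\mathbf{x}\in[0,1]^d$ list the elements of $S$ in a uniformly random order. Then the following procedure is ''successful'' with probability at least $1-\exp(-\Omega(d^{2\gamma}))$, and whenever it is successful it outputs $\operatorname{med}(\mathbf{x})$. Procedure: (1) partition the $d$ entries of $\mathbf{x}$ into consecutive blocks $\mathbf{x}_1,\dots,\mathbf{x}_q$ of size $\lceil d^{2/3}\rceil$ (the last block possibly smaller); for $i\in[q-1]$ let $\mathbf{y}_i$ consist of the elements of $\mathbf{x}_i$ whose ranks within $\mathbf{x}_i$ belong to $\{\lfloor \frac{d^{2/3}}{2}-d^{\frac13+\gamma}\rfloor,\dots,\lceil \frac{d^{2/3}}{2}+d^{\frac13+\gamma}\rceil\}$, and let $\mathbf{y}_q=\mathbf{x}_q$; (2) compare each entry of the concatenation $(\mathbf{y}_1,\dots,\mathbf{y}_q)$ with all entries of $\mathbf{x}$, and output the entry that is larger than exactly $d/2-1$ entries of $\mathbf{x}$ (if none exists, the procedure fails). The procedure is called successful if some $\mathbf{y}_i$, $i\in[q]$, contains $\operatorname{med}(\mathbf{x})$.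
   Context: $\operatorname{med}(\mathbf{x})$ denotes the median of the entries of $\mathbf{x}$ (the element of rank $d/2$ in ascending order). Ranks are positions in ascending sorted order. *)

From HB Require Import structures.
From mathcomp Require Import all_boot all_order all_algebra all_fingroup.
From mathcomp Require Import all_classical all_reals.
From mathcomp Require Import sequences exp.
Set Implicit Arguments. Unset Strict Implicit. Unset Printing Implicit Defensive.
Import Order.TTheory GRing.Theory Num.Theory.
Local Open Scope ring_scope.

Section Median.
Variable R : realType.
Variable gamma : R.

Definition nsmaller (x : seq R) (e : R) : nat := count (fun z => z < e) x.

Definition rank_in (s : seq R) (e : R) : nat := (nsmaller s e).+1.

(* target count: the median is larger than exactly d/2 - 1 entries *)
Definition med_cnt (x : seq R) : nat := ((size x)./2 - 1)%N.

(* med(x): the element of (1-indexed) rank d/2 in ascending order *)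
Definition med (x : seq R) : R := nth 0 (sort <=%R x) (med_cnt x).

Definition dR (x : seq R) : R := (size x)%:R.

Definition blk (x : seq R) : nat := absz (Num.ceil (dR x `^ (2 / 3))).

Definition nblocks (x : seq R) : nat := ((size x + blk x - 1) %/ blk x)%N.

(* i-th block (0-indexed, i < q) *)
Definition block (x : seq R) (i : nat) : seq R :=
  take (blk x) (drop (i * blk x) x).

Definition rank_lo (x : seq R) : int :=
  Num.floor (dR x `^ (2 / 3) / 2 - dR x `^ (3^-1 + gamma)).
Definition rank_hi (x : seq R) : int :=
  Num.ceil (dR x `^ (2 / 3) / 2 + dR x `^ (3^-1 + gamma)).

Definition yblock (x : seq R) (i : nat) : seq R :=
  if (i.+1 < nblocks x)%N then
    [seq e <- block x i | (rank_lo x <= (rank_in (block x i) e)%:Z)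
                          && ((rank_in (block x i) e)%:Z <= rank_hi x)]
  else block x i.

Definition candidates (x : seq R) : seq R :=
  flatten [seq yblock x i | i <- iota 0 (nblocks x)].

Definition output (x : seq R) : option R :=
  ohead [seq e <- candidates x | nsmaller x e == med_cnt x].

Definition successful (x : seq R) : bool :=
  has (fun i => med x \in yblock x i) (iota 0 (nblocks x)).

End Median.

(* the ordering of S = image of s given by the permutation sigma *)
Definition ordering (R : realType) (d : nat) (s : 'I_d -> R) (sigma : 'S_d)
  : seq R := [seq s (sigma i) | i <- enum 'I_d].

Definition succ_prob (R : realType) (gamma : R) (d : nat) (s : 'I_d -> R) : R :=
  (#|[set sigma : 'S_d | successful gamma (ordering s sigma)]|)%:R / (d`!)%:R.

From HB Require Import structures.
From mathcomp Require Import all_boot all_order all_algebra all_fingroup.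
From mathcomp Require Import all_classical all_reals.
From mathcomp Require Import sequences exp.
From mathcomp Require Import zify ring lra.
Set Implicit Arguments.
Unset Strict Implicit.
Unset Printing Implicit Defensive.
Import Order.TTheory GRing.Theory Num.Theory.
Local Open Scope ring_scope.

(* A value e of a sequence x with distinct entries is determined by the number
   of entries of x below it: it is the entry of that rank in sorted order.  Hence
   the procedure outputs the median whenever the median is among the candidates.

   For the success probability fix the median m and let X be the set of indices
   whose value lies below m.  If m sits in a full block A of size B ~ d^(2/3)
   with a rank outside [lo, hi], then the number of positions of A whose value
   lies in X (or in its complement) exceeds its mean, at most B/2 + 3/2, by
   a = d^(1/3 + gamma) - 1/2.  Under a uniform permutation the probability that
   a fixed J is mapped into X is at most (|X| / d)^|J|, so expanding
   (1 + t)^hits over subsets J shows that these counts have exponential moments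
   dominated by binomial ones; Markov's inequality then gives the tail
   exp(-a^2 / (4 B)) <= exp(-d^(2 gamma) / 32).  A union bound over fewer than
   d blocks costs a factor 2 d, which exp(d^(2 gamma) / 64) absorbs. *)

Lemma card_set_sum (T : finType) (A : {set T}) (P : pred T) :
  #|[set x in A | P x]| = (\sum_(x in A) P x)%N.
Proof.
rewrite -sum1_card big_mkcond [RHS]big_mkcond /=.
by apply: eq_bigr => x _; rewrite inE; case: (x \in A); case: (P x).
Qed.

Lemma count_uniq_card (T : finType) (l : seq T) (P : pred T) : uniq l ->
  count P l = #|[set j in l | P j]|.
Proof.
move=> ul; rewrite -size_filter -(card_uniqP (filter_uniq P ul)).
by apply: eq_card => j; rewrite !inE mem_filter andbC.
Qed.

Lemma double_count (I J : finType) (A : {set I}) (B : {set J}) (P : I -> J -> bool) :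
  (\sum_(i in A) #|[set j in B | P i j]| = \sum_(j in B) #|[set i in A | P i j]|)%N.
Proof.
under eq_bigr do rewrite card_set_sum.
by rewrite exchange_big; apply: eq_bigr => j _; rewrite card_set_sum.
Qed.

Lemma card_bigcup_le (I T : finType) (P : pred I) (E : I -> {set T}) :
  (#|\bigcup_(i | P i) E i| <= \sum_(i | P i) #|E i|)%N.
Proof.
elim/big_rec2: _ => [|i U n _ IH]; first by rewrite cards0.
by rewrite cardsU (leq_trans (leq_subr _ _)) ?leq_add2l.
Qed.

Lemma sum_powerset_expr (R : comPzSemiRingType) (T : finType) (B : {set T}) (t : R) :
  \sum_(J in powerset B) t ^+ #|J| = (1 + t) ^+ #|B|.
Proof.
have -> : (1 + t) ^+ #|B| = \prod_i ((if i \in B then t else 0) + 1).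
  rewrite -prodr_const big_mkcond /=; apply: eq_bigr => i _.
  by case: (i \in B); rewrite ?add0r // addrC.
rewrite bigA_distr big_mkcond /=; apply: eq_bigr => J _.
rewrite powersetE; case: (boolP (J \subset B)) => JB.
  rewrite -prodr_const big_mkcond /=; apply: eq_bigr => i _.
  by case: (boolP (i \in J)) => // /(fintype.subsetP JB) ->.
have [i iJ iB] := fintype.subsetPn JB.
by rewrite [RHS](bigD1 i) //= iJ (negbTE iB) mul0r.
Qed.

Lemma expR_sub_sqr_le1D (R : realType) (t : R) : 0 <= t -> expR (t - t ^+ 2) <= 1 + t.
Proof.
move=> t0.
have pos : 0 < 1 - (t - t ^+ 2) by nra.
have := expR_ge1Dx (- (t - t ^+ 2)).
rewrite -(ler_pM2l (expR_gt0 (t - t ^+ 2))) -expRD subrr expR0 => inv_bound.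
by rewrite -(ler_pM2r pos); apply: le_trans inv_bound _; nra.
Qed.

Section PermsInto.
Variables (d : nat) (X : {set 'I_d}).

Definition perms_into (J : {set 'I_d}) : {set 'S_d} :=
  [set s : 'S_d | J \subset s @^-1: X].

Lemma card_perms_into_setU1 (J : {set 'I_d}) (j0 : 'I_d) : j0 \notin J ->
  (#|perms_into (j0 |: J)| * (d - #|J|) = #|perms_into J| * (#|X| - #|J|))%N.
Proof.
move=> j0J.
have cardCJ : #|~: J| = (d - #|J|)%N by rewrite cardsCs finset.setCK card_ord.
have free_targets s : s \in perms_into J ->
    #|[set j in ~: J | s j \in X]| = (#|X| - #|J|)%N.
  rewrite inE => sJ.
  have -> : [set j in ~: J | s j \in X] = s @^-1: X :\: J.
    by apply/setP => j; rewrite !inE andbC.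
  by rewrite cardsDS // card_preimset //; apply: perm_inj.
have shifted j : j \in ~: J ->
    #|[set s in perms_into J | s j \in X]| = #|perms_into (j0 |: J)|.
  rewrite inE => jJ.
  have neq i : i \in J -> (j0 != i) && (j != i).
    by move=> iJ; apply/andP; split; apply/eqP => ei; [move: j0J | move: jJ]; rewrite ei iJ.
  rewrite -[RHS](card_preimset _ (mulgI (tperm j0 j))); apply: eq_card => s.
  rewrite !inE finset.subUset finset.sub1set !inE permM tpermL andbC; congr (_ && _).
  apply/fintype.subsetP/fintype.subsetP => sub i iJ; have /andP [ji ji'] := neq i iJ.
    by have := sub i iJ; rewrite !inE permM tpermD.
  by have := sub i iJ; rewrite !inE permM tpermD.
have := double_count (perms_into J) (~: J) (fun s j => s j \in X).
rewrite (eq_bigr _ free_targets) (eq_bigr _ shifted) !sum_nat_const cardCJ.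
by move=> ->; rewrite mulnC.
Qed.

Lemma card_perms_into_leq (J : {set 'I_d}) :
  (#|perms_into J| * d ^ #|J| <= d`! * #|X| ^ #|J|)%N.
Proof.
have [n cJ] : exists n, #|J| = n by eexists.
elim: n J cJ => [|n IH] J cJ.
  have -> : perms_into J = [set: 'S_d].
    move/eqP: cJ; rewrite cards_eq0 => /eqP ->.
    by apply/finset.setP => s; rewrite !inE finset.sub0set.
  by rewrite cJ cardsT card_Sn !expn0 !muln1.
have [j0 j0J] : exists j0, j0 \in J by apply/set0Pn; rewrite -card_gt0 cJ.
set J' := J :\ j0.
have j0J' : j0 \notin J' by rewrite !inE eqxx.
have cJ' : #|J'| = n by move: cJ; rewrite (cardsD1 j0) j0J => -[].
have defJ : J = j0 |: J' by rewrite finset.setD1K.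
have step := card_perms_into_setU1 j0J'; rewrite -defJ cJ' in step.
have IHJ' := IH J' cJ'.
have Xd : (#|X| <= d)%N by rewrite -[X in (_ <= X)%N]card_ord max_card.
have nd : (n < d)%N by rewrite -cJ -[X in (_ <= X)%N]card_ord max_card.
have dn0 : (0 < d - n)%N by rewrite subn_gt0.
have key : ((#|X| - n) * d <= #|X| * (d - n))%N by nia.
rewrite cJ' in IHJ'; rewrite cJ !expnSr -(leq_pmul2r dn0).
rewrite (_ : _ * _ * (d - n) = #|perms_into J'| * d ^ n * ((#|X| - n) * d))%N;
  last by rewrite mulnAC step; ring.
rewrite (_ : d`! * _ * (d - n) = d`! * #|X| ^ n * (#|X| * (d - n)))%N; last by ring.
exact: leq_mul.
Qed.

Definition hits (A : {set 'I_d}) (s : 'S_d) : nat := #|A :&: s @^-1: X|.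

Lemma sum_expr_hits_le (R : realFieldType) (A : {set 'I_d}) (t : R) :
  (0 < d)%N -> 0 <= t ->
  \sum_(s : 'S_d) (1 + t) ^+ hits A s <= d`!%:R * (1 + t * (#|X|%:R / d%:R)) ^+ #|A|.
Proof.
move=> d0 t0.
have expand s : (1 + t) ^+ hits A s =
    \sum_(J in powerset A) (if s \in perms_into J then t ^+ #|J| else 0).
  rewrite /hits -sum_powerset_expr big_mkcond [RHS]big_mkcond /=.
  by apply: eq_bigr => J _; rewrite powersetI !inE; case: (J \subset A).
under eq_bigr do rewrite expand.
rewrite exchange_big /= -sum_powerset_expr mulr_sumr; apply: ler_sum => J _.
rewrite -big_mkcond /= sumr_const -[_ *+ _]mulr_natl exprMn mulrA mulrAC.
apply: ler_wpM2r; first exact: exprn_ge0.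
rewrite expr_div_n mulrA ler_pdivlMr ?exprn_gt0 ?ltr0n //.
by rewrite -!natrX -!natrM ler_nat card_perms_into_leq.
Qed.

Lemma card_hits_ge (R : realType) (A : {set 'I_d}) (k a : R) :
  (0 < #|A|)%N -> 0 <= a -> #|A|%:R * (#|X|%:R / d%:R) + a <= k ->
  (#|[set s : 'S_d | k <= (hits A s)%:R]|%:R : R)
    <= d`!%:R * expR (- (a ^+ 2 / (4 * #|A|%:R))).
Proof.
move=> A0 a0 hk; set n := #|A| in A0 hk *; set p := #|X|%:R / d%:R in hk *.
have d0 : (0 < d)%N by rewrite -[d]card_ord (leq_trans A0) ?max_card.
have n0 : (0 : R) < n%:R by rewrite ltr0n.
set t := a / (2 * n%:R).
have t0 : 0 <= t by rewrite divr_ge0 // mulr_ge0 // ler0n.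
set E := [set s : 'S_d | k <= (hits A s)%:R].
(* Markov's inequality for (1 + t)^hits; t = a / (2 |A|) optimises the exponent. *)
have markov : #|E|%:R * expR (k * t - n%:R * t ^+ 2) <= \sum_s (1 + t) ^+ hits A s.
  rewrite mulr_natl -sumr_const [X in _ <= X](bigID (mem E)) /= -[X in X <= _]addr0.
  apply: lerD; last by apply: sumr_ge0 => s _; rewrite exprn_ge0 // addr_ge0.
  apply: ler_sum => s; rewrite inE => ks.
  have hn : ((hits A s)%:R : R) <= n%:R by rewrite ler_nat subset_leq_card ?subsetIl.
  apply: (@le_trans _ _ (expR (t - t ^+ 2) ^+ hits A s)).
    by rewrite -expRM_natl ler_expR; nra.
  by apply: lerXn2r; rewrite ?nnegrE ?expR_ge0 ?addr_ge0 // expR_sub_sqr_le1D.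
have mgf : \sum_s (1 + t) ^+ hits A s <= d`!%:R * expR (n%:R * (t * p)).
  apply: le_trans (sum_expr_hits_le _ d0 t0) _; apply: ler_wpM2l; first exact: ler0n.
  rewrite expRM_natl; apply: lerXn2r; rewrite ?nnegrE ?expR_ge0 ?expR_ge1Dx //.
  by rewrite addr_ge0 // mulr_ge0 // divr_ge0 // ler0n.
have exponent : n%:R * (t * p) - (k * t - n%:R * t ^+ 2) <= - (a ^+ 2 / (4 * n%:R)).
  have -> : - (a ^+ 2 / (4 * n%:R)) = - (a * t) + n%:R * t ^+ 2.
    by rewrite /t; field; rewrite gt_eqF.
  by nra.
rewrite -ler_pdivlMr ?expR_gt0 // in markov.
apply: le_trans markov _; rewrite ler_pdivrMr ?expR_gt0 // -mulrA -expRD.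
apply: le_trans mgf _; apply: ler_wpM2l; first exact: ler0n.
by rewrite ler_expR; lra.
Qed.

End PermsInto.

Section Median.
Variables (R : realType) (gamma : R).
Implicit Types (x : seq R) (e : R).

Lemma nth_sort_nsmaller x e : e \in x -> nth 0 (sort <=%R x) (nsmaller x e) = e.
Proof.
move=> ex; have ps : perm_eq (sort <=%R x) x by rewrite perm_sort.
apply: nth_count_eq; first exact: sort_le_sorted.
rewrite /nsmaller -!(seq.permP ps) leqnn /=.
by rewrite count_lt_le_mem (perm_mem ps).
Qed.

Lemma nsmaller_nth_sort x i : uniq x -> (i < size x)%N ->
  nsmaller x (nth 0 (sort <=%R x) i) = i.
Proof.
move=> ux ix; set e := nth 0 _ i.
have ex : e \in x by rewrite -(mem_sort <=%R) mem_nth ?size_sort.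
have := nth_sort_nsmaller ex; rewrite {2}/e => /eqP.
rewrite nth_uniq ?size_sort ?sort_uniq // => [/eqP //|].
by apply: leq_trans (count_size (<= e) x); rewrite count_lt_le_mem.
Qed.

Lemma med_cnt_lt x : (0 < size x)%N -> (med_cnt x < size x)%N.
Proof. by rewrite /med_cnt; case: (size x) => // n _; rewrite -divn2; lia. Qed.

Lemma mem_med x : (0 < size x)%N -> med x \in x.
Proof. by move=> x0; rewrite -(mem_sort <=%R) mem_nth ?size_sort ?med_cnt_lt. Qed.

Lemma mem_block x i e : e \in block x i -> e \in x.
Proof. by move/mem_take/mem_drop. Qed.

Lemma mem_yblock x i e : e \in yblock gamma x i -> e \in x.
Proof.
rewrite /yblock; case: ifP => _; last exact: mem_block.
by rewrite mem_filter => /andP [_ /mem_block].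
Qed.

Lemma output_successful x : uniq x -> successful gamma x -> output gamma x = Some (med x).
Proof.
move=> ux /hasP [i iq med_i].
have cand_x e : e \in candidates gamma x -> e \in x.
  by case/flattenP => _ /mapP [j _ ->] /mem_yblock.
have med_cand : med x \in candidates gamma x.
  by apply/flattenP; exists (yblock gamma x i); rewrite ?map_f.
have x0 : (0 < size x)%N by case: (x) (mem_yblock med_i).
have nsmaller_med : nsmaller x (med x) = med_cnt x by rewrite nsmaller_nth_sort ?med_cnt_lt.
rewrite /output; set l := [seq e <- _ | _].
have : med x \in l by rewrite mem_filter nsmaller_med eqxx.
have : all (pred1 (med x)) l.
  apply/allP => e; rewrite mem_filter => /andP [/eqP he /cand_x ex] /=.
  by rewrite -(nth_sort_nsmaller ex) he.
by case: l => // e l /= /andP [/eqP ->].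
Qed.

Lemma mem_block_index x e : (0 < blk x)%N -> e \in x ->
  e \in block x (index e x %/ blk x).
Proof.
move=> B0 ex; set B := blk x; set j := index e x.
have jx : (j < size x)%N by rewrite index_mem.
have ej : j = (j %/ B * B + j %% B)%N by rewrite -divn_eq.
have jB : (j %% B < B)%N by rewrite ltn_mod.
have <- : nth 0 (block x (j %/ B)) (j %% B) = e by rewrite nth_take // nth_drop -ej nth_index.
by apply: mem_nth; rewrite size_take_min size_drop leq_min jB /=; lia.
Qed.

Lemma index_div_blk_lt x j : (0 < blk x)%N -> (j < size x)%N -> (j %/ blk x < nblocks x)%N.
Proof.
move=> B0 jx; rewrite /nblocks leq_divRL // mulSn.
by have := leq_divM j (blk x); lia.
Qed.

Lemma unsuccessful_block x : (0 < blk x)%N -> (0 < size x)%N -> ~~ successful gamma x ->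
  exists2 i, (i.+1 < nblocks x)%N &
    ~~ ((rank_lo gamma x <= (rank_in (block x i) (med x))%:Z) &&
        ((rank_in (block x i) (med x))%:Z <= rank_hi gamma x)).
Proof.
move=> B0 x0 fail; set i := (index (med x) x %/ blk x)%N.
have med_i : med x \in block x i by apply: mem_block_index; rewrite ?mem_med.
have iq : (i < nblocks x)%N by apply: index_div_blk_lt; rewrite // index_mem mem_med.
have med_yi : med x \notin yblock gamma x i.
  by apply: contra fail => med_yi; apply/hasP; exists i; rewrite ?mem_iota.
move: med_yi; rewrite /yblock; case: ltnP => [iq' | ?]; last by rewrite med_i.
by rewrite mem_filter med_i andbT; exists i.
Qed.

End Median.

Lemma hits_setC d (X A : {set 'I_d}) (s : 'S_d) : hits (~: X) A s = (#|A| - hits X A s)%N.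
Proof. by rewrite /hits preimsetC -finset.setDE cardsD. Qed.

Section Ordering.
Variables (R : realType) (d : nat) (s : 'I_d -> R).

Lemma size_ordering (σ : 'S_d) : size (ordering s σ) = d.
Proof. by rewrite size_map size_enum_ord. Qed.

Lemma uniq_ordering (σ : 'S_d) : injective s -> uniq (ordering s σ).
Proof. by move=> s_inj; rewrite map_inj_uniq ?enum_uniq // => i j /s_inj /perm_inj. Qed.

Lemma perm_eq_ordering (σ τ : 'S_d) : perm_eq (ordering s σ) (ordering s τ).
Proof.
have enum_perm (ρ : 'S_d) : perm_eq [seq ρ i | i <- enum 'I_d] (enum 'I_d).
  apply: uniq_perm; rewrite ?(map_inj_uniq (@perm_inj _ ρ)) ?enum_uniq // => i.
  by rewrite mem_enum; apply/mapP; exists ((ρ^-1)%g i); rewrite ?mem_enum ?permKV.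
have ordering_map (ρ : 'S_d) : ordering s ρ = map s [seq ρ i | i <- enum 'I_d].
  exact: map_comp.
rewrite !ordering_map; apply: perm_map.
by apply: perm_trans (enum_perm σ) _; rewrite perm_sym enum_perm.
Qed.

End Ordering.

Lemma linear_le_expR_powR (R : realType) (g c : R) : 0 < g -> 0 < c ->
  exists d0 : nat, forall d : nat, (d0 <= d)%N -> 2 * d%:R <= expR (c * d%:R `^ g).
Proof.
move=> g0 c0; set h := g / 2; have h0 : 0 < h by rewrite divr_gt0.
set M := 2 `^ h / (h * c).
have two_h : (0 : R) < 2 `^ h by rewrite powR_gt0 ?ltr0n.
have M0 : 0 < M by apply: divr_gt0 => //; apply: mulr_gt0.
exists `|Num.ceil (M `^ h^-1)|%N.+1; move=> d hd.
have d0 : (0 : R) < d%:R by rewrite ltr0n (leq_trans _ hd).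
set y := d%:R `^ h; have y0 : 0 < y by rewrite powR_gt0.
have My : M <= y.
  have root_le_d : M `^ h^-1 <= d%:R.
    have ceil0 : 0 <= Num.ceil (M `^ h^-1).
      by rewrite ceil_ge0 (lt_le_trans _ (powR_ge0 _ _)) // ltrN10.
    by apply: le_trans (ceil_ge _) _; rewrite -[Num.ceil _]gez0_abs // pmulrn ler_nat ltnW.
  have := ge0_ler_powR (ltW h0) (powR_ge0 M h^-1) (ler0n R d) root_le_d.
  by rewrite -powRrM mulVf ?lt0r_neq0 // powRr1 // ltW.
have ln_le : ln (2 * d%:R) <= 2 `^ h * y / h.
  have d2 : (0 : R) < 2 * d%:R by rewrite mulr_gt0.
  have := ln_sublinear (powR_gt0 h d2); rewrite ln_powR powRM ?ler0n // -/y => lt.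
  by rewrite ler_pdivlMr // mulrC ltW.
have -> : d%:R `^ g = y ^+ 2.
  by rewrite /y -powR_mulrn ?powR_ge0 // -powRrM /h divfK ?pnatr_eq0.
rewrite -[2 * _]lnK ?posrE ?mulr_gt0 // ler_expR (le_trans ln_le) //.
have hc : 0 < h * c by apply: mulr_gt0.
have hcy : 0 < h * c * y by apply: mulr_gt0.
have defM : M * (h * c) = 2 `^ h by rewrite divfK // lt0r_neq0.
by rewrite ler_pdivrMr //; nra.
Qed.

Section RandomOrdering.
Variables (R : realType) (gamma : R) (d : nat) (s : 'I_d -> R).
Hypotheses (gamma_gt0 : 0 < gamma) (d_gt0 : (0 < d)%N) (s_inj : injective s).

Let x1 := ordering s 1%g.
Let B := blk x1.
Let q := nblocks x1.
Let m := med x1.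
Let lo := rank_lo gamma x1.
Let hi := rank_hi gamma x1.
Let B' : R := d%:R `^ (2 / 3).
Let t : R := d%:R `^ (3^-1 + gamma).
Let D : R := d%:R `^ (2 * gamma).

Let d_ge1 : (1 : R) <= d%:R. Proof. by rewrite ler1n. Qed.

Lemma blk_ordering σ : blk (ordering s σ) = B.
Proof. by rewrite /B /blk /dR !size_ordering. Qed.

Lemma nblocks_ordering σ : nblocks (ordering s σ) = q.
Proof. by rewrite /q /nblocks !blk_ordering !size_ordering. Qed.

Lemma rank_lo_ordering σ : rank_lo gamma (ordering s σ) = lo.
Proof. by rewrite /lo /rank_lo /dR !size_ordering. Qed.

Lemma rank_hi_ordering σ : rank_hi gamma (ordering s σ) = hi.
Proof. by rewrite /hi /rank_hi /dR !size_ordering. Qed.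

Lemma med_ordering σ : med (ordering s σ) = m.
Proof.
rewrite /m /med /med_cnt !size_ordering.
by have /perm_sort_leP -> := perm_eq_ordering s σ 1%g.
Qed.

Lemma B'_ge1 : 1 <= B'.
Proof. by rewrite /B' -[X in X <= _](powRr0 d%:R); apply: ler_powR => //; lra. Qed.

Lemma B'_le_d : B' <= d%:R.
Proof. by rewrite /B' ler1_powR //; lra. Qed.

Lemma blk_ceil : B%:R = (Num.ceil B')%:~R :> R.
Proof.
rewrite /B /blk /dR size_ordering natr_absz ger0_norm // ceil_ge0.
by apply: lt_le_trans B'_ge1; lra.
Qed.

Lemma B'_le_blk : B' <= B%:R.
Proof. by rewrite blk_ceil ceil_ge. Qed.

Lemma blk_le_B'1 : B%:R <= B' + 1.
Proof. by rewrite blk_ceil; have := ceilB1_lt B'; rewrite intrD; lra. Qed.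

Lemma blk_gt0 : (0 < B)%N.
Proof. by rewrite -(ltr0n R); apply: lt_le_trans B'_le_blk; apply: lt_le_trans B'_ge1. Qed.

Lemma blk_le_d : (B <= d)%N.
Proof.
have : Num.ceil B' <= d%:Z by rewrite ceil_le_int -pmulrn B'_le_d.
by rewrite -(ler_int R) -blk_ceil -pmulrn ler_nat.
Qed.

Lemma t_ge1 : 1 <= t.
Proof.
rewrite /t -[X in X <= _](powRr0 d%:R); apply: ler_powR => //.
by rewrite addr_ge0 ?invr_ge0 // ltW.
Qed.

Lemma t_sqr : t ^+ 2 = B' * D.
Proof.
rewrite -powR_mulrn ?powR_ge0 // -powRrM -powRD; last by rewrite pnatr_eq0 -lt0n d_gt0 implybT.
by congr (_ `^ _); field.
Qed.

Lemma rank_lo_le : (lo%:~R : R) <= B' / 2 - t.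
Proof. by rewrite /lo /rank_lo /dR size_ordering floor_le. Qed.

Lemma rank_hi_ge : B' / 2 + t <= (hi%:~R : R).
Proof. by rewrite /hi /rank_hi /dR size_ordering ceil_ge. Qed.

Lemma nblocks_le : (q <= d)%N.
Proof.
rewrite /q /nblocks blk_ordering size_ordering -ltnS ltn_divLR ?blk_gt0 //.
by have := blk_gt0; nia.
Qed.

(* positions i lists the indices j such that s (σ j) lies in block i of ordering s σ. *)
Let positions i := take B (drop (i * B) (enum 'I_d)).
Let A i : {set 'I_d} := [set j in positions i].
Let small : {set 'I_d} := [set j | s j < m].

Let uniq_positions i : uniq (positions i).
Proof. by rewrite take_uniq // drop_uniq // enum_uniq. Qed.

Lemma card_positions i : (i.+1 < q)%N -> #|A i| = B.
Proof.
move=> iq; rewrite cardsE (card_uniqP (uniq_positions i)) size_take_min size_drop.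
rewrite size_enum_ord; apply/minn_idPl.
move: iq; rewrite /q /nblocks blk_ordering size_ordering leq_divRL ?blk_gt0 //; nia.
Qed.

Lemma rank_in_block σ i : rank_in (block (ordering s σ) i) m = (hits small (A i) σ).+1.
Proof.
rewrite /rank_in /nsmaller /block blk_ordering /ordering -map_drop -map_take count_map.
rewrite (count_uniq_card _ (uniq_positions i)) /hits; congr _.+1.
by apply: eq_card => j; rewrite !inE.
Qed.

Lemma card_small : #|small| = (d./2 - 1)%N.
Proof.
have := nsmaller_nth_sort (uniq_ordering 1%g s_inj) (med_cnt_lt (x := x1) _).
rewrite size_ordering /med_cnt size_ordering => <- //.
rewrite /nsmaller count_map (count_uniq_card _ (enum_uniq _)).
rewrite /small /m /med /med_cnt size_ordering.
by apply: eq_card => j; rewrite !inE mem_enum perm1.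
Qed.

Let dev_small i := [set σ : 'S_d | hi%:~R <= (hits small (A i) σ)%:R :> R].
(* A rank below lo puts at least B + 2 - lo entries of the block at or above m. *)
Let dev_large i :=
  [set σ : 'S_d | (B%:Z + 2 - lo)%:~R <= (hits (~: small) (A i) σ)%:R :> R].

Lemma unsuccessful_deviation σ : ~~ successful gamma (ordering s σ) ->
  exists2 i, (i < q.-1)%N & σ \in dev_small i :|: dev_large i.
Proof.
move=> fail; have [||i iq out] := unsuccessful_block (x := ordering s σ) _ _ fail.
- by rewrite blk_ordering blk_gt0.
- by rewrite size_ordering.
rewrite nblocks_ordering in iq; exists i; first by rewrite ltn_predRL.
rewrite rank_lo_ordering rank_hi_ordering med_ordering rank_in_block in out.
have hB : (hits small (A i) σ <= B)%N.
  by rewrite -(card_positions iq) subset_leq_card ?subsetIl.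
rewrite !inE hits_setC card_positions // !pmulrn !ler_int.
by move: out; rewrite negb_and -!ltNge => /orP [?|?]; apply/orP; [right | left]; lia.
Qed.

Let mean_small : B%:R * (#|small|%:R / d%:R) <= B%:R / 2 :> R.
Proof.
have d0 : (0 : R) < d%:R by rewrite ltr0n.
have : (#|small| * 2 <= d)%N by rewrite card_small; have := odd_double_half d; lia.
rewrite -(ler_nat R) natrM => small_le.
by rewrite mulrA ler_pdivrMr //; have := ler0n R B; nra.
Qed.

Let mean_large : B%:R * (#|~: small|%:R / d%:R) <= B%:R / 2 + 3 / 2 :> R.
Proof.
have d0 : (0 : R) < d%:R by rewrite ltr0n.
have : (#|~: small| * 2 <= d + 3)%N.
  by rewrite cardsCs finset.setCK card_ord card_small; have := odd_double_half d; lia.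
rewrite -(ler_nat R) natrM natrD => large_le.
have := blk_le_d; rewrite -(ler_nat R) => Bd.
by rewrite mulrA ler_pdivrMr //; have := ler0n R B; nra.
Qed.

Lemma deviation_exponent : D / 32 <= (t - 2^-1) ^+ 2 / (4 * B%:R).
Proof.
have B0 : (0 : R) < B%:R by rewrite ltr0n blk_gt0.
have := t_ge1; have := t_sqr; have := B'_ge1; have := blk_le_B'1.
have : 0 <= D := powR_ge0 _ _.
rewrite ler_pdivlMr ?mulr_gt0 //; nra.
Qed.

Let deviation_bound (X : {set 'I_d}) i (k : R) : (i.+1 < q)%N ->
  B%:R * (#|X|%:R / d%:R) + (t - 2^-1) <= k ->
  (#|[set σ : 'S_d | k <= (hits X (A i) σ)%:R]|%:R : R) <= d`!%:R * expR (- (D / 32)).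
Proof.
move=> iq mean_k; have cardA := card_positions iq.
apply: le_trans (card_hits_ge (a := t - 2^-1) _ _ _) _; rewrite ?cardA ?blk_gt0 //.
- by have := t_ge1; lra.
- apply: ler_wpM2l; first exact: ler0n.
  by rewrite ler_expR lerN2 deviation_exponent.
Qed.

Lemma card_unsuccessful :
  (#|[set σ : 'S_d | ~~ successful gamma (ordering s σ)]|%:R : R)
    <= 2 * d%:R * (d`!%:R * expR (- (D / 32))).
Proof.
set e := d`!%:R * expR (- (D / 32)).
have dev_le i : (i < q.-1)%N -> (#|dev_small i :|: dev_large i|%:R : R) <= 2 * e.
  rewrite ltn_predRL => iq; apply: le_trans (_ : (#|dev_small i| + #|dev_large i|)%:R <= _).
    by rewrite ler_nat cardsU leq_subr.
  have hsmall : (#|dev_small i|%:R : R) <= e.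
    apply: deviation_bound => //.
    by have := blk_le_B'1; have := rank_hi_ge; have := mean_small; lra.
  have hlarge : (#|dev_large i|%:R : R) <= e.
    apply: deviation_bound => //.
    rewrite intrB intrD -pmulrn.
    by have := B'_le_blk; have := rank_lo_le; have := mean_large; lra.
  by rewrite natrD; lra.
have cover : [set σ | ~~ successful gamma (ordering s σ)]
    \subset \bigcup_(i : 'I_q.-1) (dev_small i :|: dev_large i).
  apply/fintype.subsetP => σ; rewrite inE => /unsuccessful_deviation [i iq dev].
  by apply/bigcupP; exists (Ordinal iq).
apply: le_trans (_ : (\sum_(i : 'I_q.-1) #|dev_small i :|: dev_large i|)%:R <= _).
  by rewrite ler_nat (leq_trans (subset_leq_card cover)) // card_bigcup_le.
rewrite natr_sum; apply: le_trans (_ : _ <= \sum_(i : 'I_q.-1) 2 * e) _.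
  by apply: ler_sum => i _; apply: dev_le.
have qd : ((q.-1)%:R : R) <= d%:R by rewrite ler_nat (leq_trans (leq_pred _) nblocks_le).
have e0 : 0 <= e by rewrite mulr_ge0 ?ler0n ?expR_ge0.
by rewrite sumr_const card_ord -mulr_natl; nra.
Qed.

Lemma succ_prob_ge : 2 * d%:R <= expR (64^-1 * D) ->
  1 - expR (- (64^-1 * D)) <= succ_prob gamma s.
Proof.
move=> growth; set S := [set σ : 'S_d | successful gamma (ordering s σ)].
have fact0 : (0 : R) < d`!%:R by rewrite ltr0n fact_gt0.
have cardS : (#|S|%:R : R) = d`!%:R - #|~: S|%:R.
  by rewrite -card_Sn -(cardsC S) natrD addrK.
rewrite /succ_prob -/S cardS mulrBl divff ?gt_eqF // lerD2l lerN2 ler_pdivrMr //.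
have -> : ~: S = [set σ | ~~ successful gamma (ordering s σ)].
  by apply/finset.setP => σ; rewrite !inE.
apply: le_trans card_unsuccessful _.
have e0 : 0 <= d`!%:R * expR (- (D / 32)) by rewrite mulr_ge0 ?ler0n ?expR_ge0.
apply: le_trans (ler_wpM2r e0 growth) _.
rewrite mulrCA -expRD mulrC; apply: ler_wpM2r; first exact: ler0n.
by rewrite ler_expR; lra.
Qed.

End RandomOrdering.

Theorem propositionC2 (R : realType) (gamma : R) :
  0 < gamma ->
  (exists c : R, 0 < c /\
     exists d0 : nat, forall (d : nat) (s : 'I_d -> R),
       (d0 <= d)%N -> injective s -> (forall i, 0 < s i < 1) ->
       1 - expR (- (c * d%:R `^ (2 * gamma))) <= succ_prob gamma s)
  /\
  (forall (d : nat) (s : 'I_d -> R) (sigma : 'S_d),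
     injective s -> (forall i, 0 < s i < 1) ->
     successful gamma (ordering s sigma) ->
     output gamma (ordering s sigma) = Some (med (ordering s sigma))).
Proof.
move=> gamma_gt0; split; last first.
  by move=> d s σ s_inj _; apply: output_successful; apply: uniq_ordering.
have c0 : (0 : R) < 64^-1 by rewrite invr_gt0.
have [d0 growth] := linear_le_expR_powR (mulr_gt0 (ltr0Sn R 1) gamma_gt0) c0.
exists 64^-1; split => //; exists (maxn d0 1) => d s.
rewrite geq_max => /andP [dd0 d1] s_inj _.
exact: succ_prob_ge gamma_gt0 d1 s_inj (growth d dd0).
Qed.
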